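(* The graph $\{(x_1,\dots,x_n,y)\in\mathbb R^{n+1}: y=x_1^2+\cdots+x_n^2\}$ (with the metric induced from $\mathbb R^{n+1}$) is $\Phi$-SSU if and only if $n>4$.
   Context: A Riemannian $n$-manifold $N$ is $\Phi$-SSU if there is an isometric immersion $N\to\mathbb R^q$ with second fundamental form $\mathsf B$ such that for every $y\in N$ and every unit $\mathsf x\in T_yN$, $\sum_{\beta=1}^n\big(4|\mathsf B(\mathsf x,\mathsf e_\beta)|^2-\langle \mathsf B(\mathsf x,\mathsf x),\mathsf B(\mathsf e_\beta,\mathsf e_\beta)\rangle\big)<0$, where $\{\mathsf e_\beta\}$ is an orthonormal basis of $T_yN$. *)

From HB Require Import structures.
From mathcomp Require Import all_boot all_order all_algebra.
From mathcomp Require Import all_classical all_reals all_analysis.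
Set Implicit Arguments. Unset Strict Implicit. Unset Printing Implicit Defensive.
Import Order.TTheory GRing.Theory Num.Theory.
Import numFieldNormedType.Exports.
Local Open Scope ring_scope.

Section SSU.
Variable R : realType.

Definition dotv (k : nat) (u v : 'rV[R]_k) : R := (u *m v^T) ord0 ord0.
Definition sqnorm (k : nat) (u : 'rV[R]_k) : R := dotv u u.

Fixpoint iderive (m k : nat) (vs : seq 'rV[R]_m) (f : 'rV[R]_m -> 'rV[R]_k)
  : 'rV[R]_m -> 'rV[R]_k :=
  match vs with
  | [::] => f
  | v :: vs' => fun a => 'D_v (iderive vs' f) a
  end.

Definition smooth (m k : nat) (f : 'rV[R]_m -> 'rV[R]_k) : Prop :=
  (forall (vs : seq 'rV[R]_m) (v a : 'rV[R]_m), derivable (iderive vs f) a v) /\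
  (forall vs : seq 'rV[R]_m, continuous (iderive vs f)).

Definition jac (m k : nat) (f : 'rV[R]_m -> 'rV[R]_k) (a : 'rV[R]_m) : 'M[R]_(m, k) :=
  \matrix_(i < m, j < k) ('D_(delta_mx ord0 i) f a) ord0 j.

(* Pull-back metric (Gram matrix) of f at a: g(u,v) = u *m gram f a *m v^T. *)
Definition gram (m k : nat) (f : 'rV[R]_m -> 'rV[R]_k) (a : 'rV[R]_m) : 'M[R]_m :=
  jac f a *m (jac f a)^T.

(* The paraboloid graph y = x_1^2 + ... + x_n^2 in R^(n+1), as the global
   parametrization x |-> (x, |x|^2). *)
Definition paraboloid (n : nat) (x : 'rV[R]_n) : 'rV[R]_(n + 1) :=
  row_mx x (const_mx (\sum_(i < n) x ord0 i ^+ 2)).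

(* Normal component of w in R^k w.r.t. the tangent space = row space of J
   (J of full row rank): w minus its orthogonal projection onto rowspace J. *)
Definition normal_part (m k : nat) (J : 'M[R]_(m, k)) (w : 'rV[R]_k) : 'rV[R]_k :=
  w - w *m J^T *m invmx (J *m J^T) *m J.

Definition sff (m k : nat) (G : 'rV[R]_m -> 'rV[R]_k) (a u v : 'rV[R]_m) : 'rV[R]_k :=
  normal_part (jac G a) ('D_u ('D_v G) a).

(* G : R^n -> R^q is an isometric immersion of (R^n, metric pulled back by phi),
   i.e. G o phi^{-1} is an isometric immersion of the image manifold. *)
Definition isometric_immersion (m p k : nat) (phi : 'rV[R]_m -> 'rV[R]_p)
  (G : 'rV[R]_m -> 'rV[R]_k) : Prop :=
  smooth G /\ forall a, gram G a = gram phi a.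

(* Phi-SSU for the Riemannian manifold parametrized (globally, diffeomorphically)
   by phi : R^m -> R^p with the induced metric. Tangent vectors at phi a are
   represented by coordinate vectors u, with metric u *m gram phi a *m v^T;
   an orthonormal basis is a matrix E with E g E^T = 1. *)
Definition PhiSSU (m p : nat) (phi : 'rV[R]_m -> 'rV[R]_p) : Prop :=
  exists (q : nat) (G : 'rV[R]_m -> 'rV[R]_q),
    isometric_immersion phi G /\
    forall (a u : 'rV[R]_m) (E : 'M[R]_m),
      (u *m gram phi a *m u^T) ord0 ord0 = 1 ->
      E *m gram phi a *m E^T = 1%:M ->
      \sum_(b < m) (4 * sqnorm (sff G a u (row b E))
                     - dotv (sff G a u u) (sff G a (row b E) (row b E))) < 0.

End SSU.

(* Along the paraboloid y = |x|^2 the second fundamental form of the graph is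
   B(u, v) = 2 <u, v> / |N|^2 N, with N = (-2x, 1) and induced metric g = 1 + 4 x^T x.
   For an orthonormal frame E (so E^T E = g^-1) and a unit vector u, the Phi-SSU sum
   therefore equals (4 / |N|^2) (4 u g^-1 u^T - |u|^2 tr g^-1).  Since
   u g^-1 u^T <= |u|^2 and tr g^-1 = n - 4|x|^2 / (1 + 4|x|^2) > n - 1, it is
   negative as soon as n >= 5.
   Conversely, for any isometric immersion and an orthonormal basis e_1, ..., e_n
   (available at x = 0, where g = 1), summing the Phi-SSU inequalities over
   u = e_c gives 4 sum_(b,c) |B(e_c, e_b)|^2 < |sum_c B(e_c, e_c)|^2
   <= n sum_c |B(e_c, e_c)|^2 by Cauchy-Schwarz, which for n <= 4 is at most the
   left-hand side. *)

From mathcomp Require Import all_boot all_order all_algebra.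
From mathcomp Require Import all_classical all_reals all_analysis.
From mathcomp Require Import ring lra.
Set Implicit Arguments. Unset Strict Implicit. Unset Printing Implicit Defensive.
Import Order.TTheory GRing.Theory Num.Theory.
Import numFieldNormedType.Exports.
Local Open Scope ring_scope.
Local Open Scope classical_set_scope.

Section Paraboloid.
Variable R : realType.

Lemma dotvE k (u v : 'rV[R]_k) : dotv u v = \sum_j u ord0 j * v ord0 j.
Proof. by rewrite /dotv mxE; apply: eq_bigr => j _; rewrite mxE. Qed.

Lemma dotvC k (u v : 'rV[R]_k) : dotv u v = dotv v u.
Proof. by rewrite !dotvE; apply: eq_bigr => j _; rewrite mulrC. Qed.

Lemma dotvDl k (u v w : 'rV[R]_k) : dotv (u + v) w = dotv u w + dotv v w.
Proof. by rewrite !dotvE -big_split; apply: eq_bigr => j _; rewrite mxE mulrDl. Qed.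

Lemma dotvDr k (u v w : 'rV[R]_k) : dotv w (u + v) = dotv w u + dotv w v.
Proof. by rewrite dotvC dotvDl !(dotvC w). Qed.

Lemma dotvZl k a (u w : 'rV[R]_k) : dotv (a *: u) w = a * dotv u w.
Proof. by rewrite !dotvE mulr_sumr; apply: eq_bigr => j _; rewrite mxE mulrA. Qed.

Lemma dotvZr k a (u w : 'rV[R]_k) : dotv w (a *: u) = a * dotv w u.
Proof. by rewrite dotvC dotvZl dotvC. Qed.

Lemma dotvBl k (u v w : 'rV[R]_k) : dotv (u - v) w = dotv u w - dotv v w.
Proof. by rewrite dotvDl -scaleN1r dotvZl mulN1r. Qed.

Lemma dotvBr k (u v w : 'rV[R]_k) : dotv w (u - v) = dotv w u - dotv w v.
Proof. by rewrite dotvC dotvBl !(dotvC w). Qed.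

Lemma dotv0r k (u : 'rV[R]_k) : dotv u 0 = 0.
Proof. by rewrite /dotv trmx0 mulmx0 mxE. Qed.

Lemma mulmx_tr_dotv k (u v : 'rV[R]_k) : u *m v^T = (dotv u v)%:M.
Proof. by apply/matrixP => i j; rewrite !ord1 [RHS]mxE eqxx mulr1n. Qed.

Lemma dotv_row_mx p q (a c : 'rV[R]_p) (b d : 'rV[R]_q) :
  dotv (row_mx a b) (row_mx c d) = dotv a c + dotv b d.
Proof. by rewrite /dotv tr_row_mx mul_row_col mxE. Qed.

Lemma dotv_delta k (u : 'rV[R]_k) i : dotv u (delta_mx 0 i) = u ord0 i.
Proof. by rewrite /dotv trmx_delta -colE mxE. Qed.

Lemma mulmx_entry_dotv k p (u : 'rV[R]_k) (M : 'M[R]_(k, p)) j :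
  (u *m M) ord0 j = dotv u (col j M)^T.
Proof. by rewrite /dotv trmxK colE mulmxA -colE [RHS]mxE. Qed.

Lemma sqnorm_ge0 k (u : 'rV[R]_k) : 0 <= sqnorm u.
Proof. by rewrite /sqnorm dotvE sumr_ge0 // => j _; rewrite -expr2 sqr_ge0. Qed.

Lemma sqnorm_eq0 k (u : 'rV[R]_k) : (sqnorm u == 0) = (u == 0).
Proof.
apply/idP/eqP => [|->]; last by rewrite /sqnorm dotv0r.
rewrite /sqnorm dotvE; under eq_bigr do rewrite -expr2.
move=> /eqP/psumr_eq0P u0; apply/rowP => j; rewrite mxE.
by apply/eqP; rewrite -sqrf_eq0 u0 // => i _; exact: sqr_ge0.
Qed.

Lemma mulmx1_invmx n (A B : 'M[R]_n) : A *m B = 1%:M -> invmx A = B.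
Proof.
move=> AB; have [Au _] := mulmx1_unit AB.
by rewrite -[RHS]mul1mx -(mulVmx Au) -mulmxA AB mulmx1.
Qed.

Lemma sum_dotv_row_sqr m k (u : 'rV[R]_k) (E : 'M[R]_(m, k)) :
  \sum_b dotv u (row b E) ^+ 2 = (u *m (E^T *m E) *m u^T) ord0 ord0.
Proof.
have -> : u *m (E^T *m E) *m u^T = (u *m E^T) *m (u *m E^T)^T.
  by rewrite trmx_mul trmxK !mulmxA.
rewrite -/(dotv (u *m E^T) (u *m E^T)) dotvE; apply: eq_bigr => b _.
by rewrite mulmx_entry_dotv tr_col trmxK expr2.
Qed.

Lemma sum_sqnorm_row m k (E : 'M[R]_(m, k)) :
  \sum_b sqnorm (row b E) = \tr (E^T *m E).
Proof.
rewrite /mxtrace; under [RHS]eq_bigr do rewrite mxE.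
rewrite exchange_big; apply: eq_bigr => b _; rewrite /sqnorm dotvE.
by apply: eq_bigr => j _; rewrite !mxE.
Qed.

Lemma orthonormal_trmx_mulmx m (g E : 'M[R]_m) :
  E *m g *m E^T = 1%:M -> E^T *m E = invmx g.
Proof.
by move=> EgE; apply/esym/mulmx1_invmx; rewrite mulmxA; apply: mulmx1C; rewrite mulmxA.
Qed.

Lemma sum_dotv_le k m (A : 'I_m -> 'rV[R]_k) :
  \sum_c \sum_b dotv (A c) (A b) <= m%:R * \sum_c sqnorm (A c).
Proof.
set S := \sum_c sqnorm (A c); set T := \sum_c \sum_b dotv (A c) (A b).
have : 0 <= \sum_c \sum_b sqnorm (A c - A b).
  by apply: sumr_ge0 => c _; apply: sumr_ge0 => b _; exact: sqnorm_ge0.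
have expand c b : sqnorm (A c - A b) = sqnorm (A c) + sqnorm (A b) - 2 * dotv (A c) (A b).
  by rewrite /sqnorm dotvBl !dotvBr (dotvC (A b)); ring.
have inner c : \sum_b sqnorm (A c - A b)
    = sqnorm (A c) *+ m + S - 2 * \sum_b dotv (A c) (A b).
  rewrite (eq_bigr _ (fun b _ => expand c b)) sumrB big_split.
  by rewrite sumr_const card_ord -mulr_sumr.
rewrite (eq_bigr _ (fun c _ => inner c)) sumrB big_split /= sumrMnl sumr_const card_ord.
rewrite -mulr_sumr -/S -/T -mulr_natr; lra.
Qed.

Lemma ssu_sum_neg_dim_gt4 k m (B : 'I_m -> 'I_m -> 'rV[R]_k) : (0 < m)%N ->
  (forall c, \sum_b (4 * sqnorm (B c b) - dotv (B c c) (B b b)) < 0) -> (4 < m)%N.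
Proof.
move=> m_gt0 neg; rewrite ltnNge; apply/negP => m_le4.
have total_neg : \sum_c \sum_b (4 * sqnorm (B c b) - dotv (B c c) (B b b)) < 0.
  rewrite (bigD1 (Ordinal m_gt0)) //=.
  have : \sum_(c | c != Ordinal m_gt0)
           \sum_b (4 * sqnorm (B c b) - dotv (B c c) (B b b)) <= 0.
    by apply: sumr_le0 => c _; exact: ltW.
  by have := neg (Ordinal m_gt0); lra.
have cs := sum_dotv_le (fun c => B c c).
set S := \sum_c sqnorm (B c c).
have diag_le : S <= \sum_c \sum_b sqnorm (B c b).
  apply: ler_sum => c _; rewrite (bigD1 c) //= lerDl.
  by apply: sumr_ge0 => b _; exact: sqnorm_ge0.
have mS_le : m%:R * S <= 4 * S.
  by rewrite ler_wpM2r ?ler_nat // sumr_ge0 // => c _; exact: sqnorm_ge0.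
move: total_neg; under eq_bigr do rewrite sumrB -mulr_sumr.
rewrite sumrB -mulr_sumr subr_lt0 ltNge => /negP; apply.
by apply: (le_trans cs); apply: (le_trans mS_le); rewrite ler_wpM2l.
Qed.

Lemma derive_affine_quotient (V W : normedModType R) (f : V -> W) (a v : V) (D Q : W) :
  (forall h : R, h != 0 -> h^-1 *: (f (h *: v + a) - f a) = D + h *: Q) ->
  derivable f a v /\ 'D_v f a = D.
Proof.
move=> fq.
have cvD : (fun h => h^-1 *: ((f \o shift a) (h *: v) - f a)) @ 0^' --> D.
  apply: (@cvg_trans _ ((fun h : R => D + h *: Q) @ 0^')).
    apply: near_eq_cvg; near=> h; rewrite /= fq //.
    near: h; exact: nbhs_dnbhs_neq.
  apply: cvg_within_filter.
  have := cvgD (cvg_cst D) (@cvgZr_tmp _ _ _ (nbhs (0:R)) _ (fun h : R => h) 0 Q cvg_id).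
  by rewrite scale0r addr0; apply; apply: nbhs_filter.
by split; [apply/cvg_ex; exists D | exact: cvg_lim].
Unshelve. all: by end_near. Qed.

Lemma continuous_mx_entries (T : topologicalType) m k (f : T -> 'M[R]_(m, k)) :
  (forall i j, continuous (fun x => f x i j)) -> continuous f.
Proof.
move=> fij; have -> : f = fun x => \sum_i \sum_j f x i j *: delta_mx i j.
  by apply: funext => x; rewrite [LHS]matrix_sum_delta.
apply: (continuous_big add_continuous) => i _.
apply: (continuous_big add_continuous) => j _ x.
apply: continuousZr_tmp; exact: fij.
Qed.

Lemma continuous_dotv (T : topologicalType) k (f g : T -> 'rV[R]_k) :
  continuous f -> continuous g -> continuous (fun x => dotv (f x) (g x)).
Proof.
move=> cf cg; under eq_fun do rewrite dotvE.
apply: (continuous_big add_continuous) => j _ x.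
have coord (h : T -> 'rV[R]_k) : continuous h -> {for x, continuous (fun y => h y ord0 j)}.
  by move=> ch; exact: (continuous_comp (ch x) (@coord_continuous R 1 k ord0 j _)).
by apply: continuousM; exact: coord.
Qed.

Definition quadmap n p (a : 'rV[R]_p) (M : 'M[R]_(n, p)) (c : R) (w : 'rV[R]_n) (k : R)
    (x : 'rV[R]_n) : 'rV[R]_(p + 1) :=
  row_mx (a + x *m M) (const_mx (c + dotv x w + k * sqnorm x)).

Lemma derive_quadmap n p a M c w k (x v : 'rV[R]_n) :
  derivable (@quadmap n p a M c w k) x v /\
  'D_v (quadmap a M c w k) x = quadmap (v *m M) 0 (dotv v w) ((2 * k) *: v) 0 x.
Proof.
apply: (@derive_affine_quotient _ _ _ _ _ _ (row_mx 0 (const_mx (k * sqnorm v)))).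
move=> h h0; rewrite /quadmap /sqnorm opp_row_mx !add_row_mx !scale_row_mx add_row_mx.
congr row_mx.
  rewrite mulmx0 scaler0 !addr0 mulmxDl -scalemxAl.
  by rewrite addrCA addrK scalerA mulVf // scale1r.
apply/rowP => j; rewrite !mxE.
rewrite !(dotvDl, dotvDr, dotvZl, dotvZr) (dotvC v x) (dotvC v w).
by field.
Qed.

Lemma continuous_quadmap n p a M c w k : continuous (@quadmap n p a M c w k).
Proof.
have c_id : continuous (@id 'rV[R]_n) by move=> x; exact: cvg_id.
have c_cst (T U : topologicalType) (r : U) : continuous (fun _ : T => r).
  by move=> ?; exact: cst_continuous.
apply: continuous_mx_entries => i j; rewrite /quadmap (ord1 i).
case: (split_ordP j) => j' -> x.
  under eq_fun do rewrite row_mxEl mxE mulmx_entry_dotv.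
  by apply: (continuousD (c_cst _ _ _ x)); exact: (continuous_dotv c_id (c_cst _ _ _)).
under eq_fun do rewrite row_mxEr mxE.
apply: (continuousD (f := fun y => c + dotv y w)); first apply: (continuousD (c_cst _ _ _ x)).
- exact: (continuous_dotv c_id (c_cst _ _ _)).
- by apply: (continuousM (c_cst _ _ _ x)); exact: (continuous_dotv c_id c_id).
Qed.

Lemma iderive_quadmap n p (vs : seq 'rV[R]_n) a M c w k :
  exists a' M' c' w' k',
    iderive vs (@quadmap n p a M c w k) = quadmap a' M' c' w' k'.
Proof.
elim: vs => [|v vs [a' [M' [c' [w' [k' IH]]]]]]; first by exists a, M, c, w, k.
exists (v *m M'), 0, (dotv v w'), ((2 * k') *: v), 0 => /=.
by rewrite IH; apply: funext => x; case: (derive_quadmap a' M' c' w' k' x v).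
Qed.

Lemma smooth_quadmap n p a M c w k : smooth (@quadmap n p a M c w k).
Proof.
split=> vs; have [a' [M' [c' [w' [k' ->]]]]] := iderive_quadmap vs a M c w k.
  by move=> v x; case: (derive_quadmap a' M' c' w' k' x v).
exact: continuous_quadmap.
Qed.

Lemma paraboloidE n : @paraboloid R n = quadmap 0 1%:M 0 0 1.
Proof.
apply: funext => x; rewrite /paraboloid /quadmap mulmx1 dotv0r !add0r mul1r.
congr row_mx; apply/rowP => j; rewrite !mxE /sqnorm dotvE.
by apply: eq_bigr => l _; rewrite expr2.
Qed.

Lemma smooth_paraboloid n : smooth (@paraboloid R n).
Proof. by rewrite paraboloidE; exact: smooth_quadmap. Qed.

Lemma derive_paraboloid n (x v : 'rV[R]_n) :
  'D_v (@paraboloid R n) x = row_mx v (const_mx (2 * dotv x v)).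
Proof.
rewrite paraboloidE; have [_ ->] := derive_quadmap 0 1%:M 0 0 1 x v.
rewrite /quadmap mulmx1 mulmx0 addr0 dotv0r; congr row_mx.
by apply/rowP => j; rewrite !mxE dotvZr; ring.
Qed.

Lemma derive2_paraboloid n (x u v : 'rV[R]_n) :
  'D_u ('D_v (@paraboloid R n)) x = row_mx 0 (const_mx (2 * dotv u v)).
Proof.
have -> : 'D_v (@paraboloid R n) = quadmap v 0 0 (2 *: v) 0.
  apply: funext => y; rewrite derive_paraboloid /quadmap mulmx0 addr0 add0r mul0r addr0.
  by rewrite dotvZr.
have [_ ->] := derive_quadmap v 0 0 (2 *: v) 0 x u.
rewrite /quadmap !mulmx0 addr0; congr row_mx.
by apply/rowP => j; rewrite !mxE !dotvZr; ring.
Qed.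

Lemma jac_paraboloid n (x : 'rV[R]_n) :
  jac (@paraboloid R n) x = row_mx 1%:M (2 *: x^T).
Proof.
apply/matrixP => i j; rewrite /jac mxE derive_paraboloid.
case: (split_ordP j) => j' ->; first by rewrite !row_mxEl !mxE eq_sym.
by rewrite !row_mxEr !mxE dotv_delta (ord1 j').
Qed.

Lemma gram_paraboloid n (x : 'rV[R]_n) :
  gram (@paraboloid R n) x = 1%:M + 4 *: (x^T *m x).
Proof.
rewrite /gram jac_paraboloid tr_row_mx mul_row_col trmx1 mulmx1 linearZ /= trmxK.
by rewrite -scalemxAl -scalemxAr scalerA -natrM.
Qed.

Definition pnormal n (x : 'rV[R]_n) : 'rV[R]_(n + 1) := row_mx (-2 *: x) (const_mx 1).

Lemma sqnorm_pnormal n (x : 'rV[R]_n) : sqnorm (pnormal x) = 1 + 4 * sqnorm x.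
Proof. by rewrite /sqnorm dotv_row_mx dotvZl dotvZr !dotvE big_ord1 !mxE; ring. Qed.

Lemma sqnorm_pnormal_gt0 n (x : 'rV[R]_n) : 0 < sqnorm (pnormal x).
Proof. by rewrite sqnorm_pnormal; have := sqnorm_ge0 x; lra. Qed.

Lemma invmx_gram_paraboloid n (x : 'rV[R]_n) :
  invmx (gram (@paraboloid R n) x) = 1%:M - (4 / sqnorm (pnormal x)) *: (x^T *m x).
Proof.
apply: mulmx1_invmx; rewrite gram_paraboloid mulmxDl mul1mx mulmxBr mulmx1.
rewrite -scalemxAl -scalemxAr mulmxA -(mulmxA x^T) mulmx_tr_dotv mul_mx_scalar.
rewrite -scalemxAl !scalerA -addrA -scalerBl -scaleNr -scalerDl.
suff -> : - (4 / sqnorm (pnormal x)) + (4 - 4 * (4 / sqnorm (pnormal x) * sqnorm x)) = 0.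
  by rewrite scale0r addr0.
by rewrite sqnorm_pnormal; have := sqnorm_ge0 x => ?; field; lra.
Qed.

Lemma mulmx_invmx_gram_paraboloid n (x : 'rV[R]_n) :
  x *m invmx (gram (@paraboloid R n) x) = (sqnorm (pnormal x))^-1 *: x.
Proof.
rewrite invmx_gram_paraboloid mulmxBr mulmx1 -scalemxAr mulmxA mulmx_tr_dotv.
rewrite mul_scalar_mx scalerA -{1}[x]scale1r -scalerBl; congr (_ *: _).
by rewrite -/(sqnorm x) sqnorm_pnormal; have := sqnorm_ge0 x => ?; field; lra.
Qed.

Lemma sff_paraboloid n (x u v : 'rV[R]_n) :
  sff (@paraboloid R n) x u v = (2 * dotv u v / sqnorm (pnormal x)) *: pnormal x.
Proof.
rewrite /sff /normal_part derive2_paraboloid -/(gram _ x) jac_paraboloid.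
set t := 2 * dotv u v.
have -> : row_mx 0 (const_mx t) *m (row_mx 1%:M (2 *: x^T))^T = (2 * t) *: x.
  rewrite tr_row_mx mul_row_col mul0mx add0r linearZ /= trmxK.
  by apply/rowP => j; rewrite !mxE big_ord1 !mxE; ring.
rewrite -scalemxAl mulmx_invmx_gram_paraboloid scalerA -scalemxAl mul_mx_row mulmx1.
rewrite -scalemxAr mulmx_tr_dotv /pnormal scale_row_mx opp_row_mx add_row_mx.
have := sqnorm_pnormal_gt0 x; rewrite sqnorm_pnormal -/(sqnorm x) => s_gt0.
rewrite scale_row_mx; congr row_mx.
  by rewrite sub0r scalerA -scaleNr; congr (_ *: _); field; lra.
by apply/rowP => j; rewrite !mxE (ord1 j) eqxx mulr1n; field; lra.
Qed.

Lemma quadform_invmx_gram_paraboloid n (a u : 'rV[R]_n) :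
  (u *m invmx (gram (@paraboloid R n) a) *m u^T) ord0 ord0
  = sqnorm u - 4 / sqnorm (pnormal a) * dotv u a ^+ 2.
Proof.
rewrite invmx_gram_paraboloid mulmxBr mulmx1 mulmxBl -scalemxAr -scalemxAl.
have -> : u *m (a^T *m a) *m u^T = (dotv u a ^+ 2)%:M.
  rewrite mulmxA -mulmxA mulmx_tr_dotv (mulmx_tr_dotv a) mul_scalar_mx scale_scalar_mx.
  by rewrite (dotvC a u) expr2.
by rewrite mulmx_tr_dotv !mxE eqxx !mulr1n.
Qed.

Lemma mxtrace_invmx_gram_paraboloid n (a : 'rV[R]_n) :
  \tr (invmx (gram (@paraboloid R n) a)) = n%:R - 4 / sqnorm (pnormal a) * sqnorm a.
Proof.
rewrite invmx_gram_paraboloid linearB linearZ /= mxtrace1 mxtrace_mulC.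
by rewrite mulmx_tr_dotv mxtrace_scalar.
Qed.

Definition ssu_sum m k (G : 'rV[R]_m -> 'rV[R]_k) (a u : 'rV[R]_m) (E : 'M[R]_m) : R :=
  \sum_b (4 * sqnorm (sff G a u (row b E)) - dotv (sff G a u u) (sff G a (row b E) (row b E))).

Lemma ssu_sum_paraboloid n (a u : 'rV[R]_n) (E : 'M[R]_n) :
  E *m gram (@paraboloid R n) a *m E^T = 1%:M ->
  ssu_sum (@paraboloid R n) a u E
  = 4 / sqnorm (pnormal a) *
    (4 * (u *m invmx (gram (@paraboloid R n) a) *m u^T) ord0 ord0
     - sqnorm u * \tr (invmx (gram (@paraboloid R n) a))).
Proof.
move=> /orthonormal_trmx_mulmx <-.
have s_gt0 := sqnorm_pnormal_gt0 a.
have term b : 4 * sqnorm (sff (@paraboloid R n) a u (row b E))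
    - dotv (sff (@paraboloid R n) a u u) (sff (@paraboloid R n) a (row b E) (row b E))
  = 4 / sqnorm (pnormal a) * (4 * dotv u (row b E) ^+ 2 - sqnorm u * sqnorm (row b E)).
  rewrite /sqnorm !sff_paraboloid !dotvZl !dotvZr -!/(sqnorm _); field; lra.
rewrite /ssu_sum (eq_bigr _ (fun b _ => term b)) -mulr_sumr sumrB -!mulr_sumr.
by rewrite sum_dotv_row_sqr sum_sqnorm_row.
Qed.

Lemma ssu_sum_paraboloid_lt0 n (a u : 'rV[R]_n) (E : 'M[R]_n) :
  (4 < n)%N -> u != 0 -> E *m gram (@paraboloid R n) a *m E^T = 1%:M ->
  ssu_sum (@paraboloid R n) a u E < 0.
Proof.
move=> n_gt4 u_neq0 /ssu_sum_paraboloid ->.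
rewrite quadform_invmx_gram_paraboloid mxtrace_invmx_gram_paraboloid.
have s_gt0 := sqnorm_pnormal_gt0 a.
rewrite pmulr_rlt0 ?divr_gt0 //.
have u_gt0 : 0 < sqnorm u by rewrite lt_def sqnorm_eq0 u_neq0 sqnorm_ge0.
have n_ge5 : 5 <= n%:R :> R by rewrite (ler_nat R 5 n).
have C_lt1 : 4 / sqnorm (pnormal a) * sqnorm a < 1.
  by rewrite mulrAC ltr_pdivrMr // mul1r sqnorm_pnormal; lra.
have D_ge0 : 0 <= 4 / sqnorm (pnormal a) * dotv u a ^+ 2.
  by rewrite mulr_ge0 ?sqr_ge0 // divr_ge0 // ltW.
nra.
Qed.

Lemma PhiSSU_paraboloid n : (4 < n)%N -> PhiSSU (@paraboloid R n).
Proof.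
move=> n_gt4; exists (n + 1)%N, (@paraboloid R n).
split; first by split; [exact: smooth_paraboloid |].
move=> a u E u_unit E_on; apply: (ssu_sum_paraboloid_lt0 n_gt4 _ E_on).
apply: contraPneq u_unit => ->; rewrite !mul0mx mxE.
by move/eqP; rewrite eq_sym oner_eq0.
Qed.

Lemma PhiSSU_dim_gt4 m p (phi : 'rV[R]_m -> 'rV[R]_p) (a : 'rV[R]_m) :
  (0 < m)%N -> gram phi a = 1%:M -> PhiSSU phi -> (4 < m)%N.
Proof.
move=> m_gt0 gram1 [q [G [_ ssu]]].
apply: (@ssu_sum_neg_dim_gt4 q m (fun c b => sff G a (row c 1%:M) (row b 1%:M))) => // c.
apply: ssu; rewrite gram1 ?trmx1 ?mulmx1 //.
by rewrite -/(dotv _ _) row1 dotv_delta mxE !eqxx.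
Qed.

End Paraboloid.

Theorem corollary5p1 (R : realType) (n : nat) (hn : (0 < n)%N) :
  PhiSSU (@paraboloid R n) <-> (4 < n)%N.
Proof.
split; last exact: PhiSSU_paraboloid.
apply: (PhiSSU_dim_gt4 (a := 0)) => //.
by rewrite gram_paraboloid trmx0 mul0mx scaler0 addr0.
Qed.
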